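(* Let $H$ and $H_j$ be $n$-qubit Hermitian operators, each with at most $m$ nonzero Pauli coefficients, and let $T\in\mathbb R$. Let $W$ be any Hermitian operator with $\|W\|_\infty<\pi$ such that $e^{-iW}=e^{i\phi}e^{iHT}e^{-iH_jT}$ for some $\phi\in\mathbb R$. Then $W$ has at most $4^m$ nonzero Pauli coefficients.
   Context: Pauli operators are labelled by $v\in\mathbb F_2^{2n}$, $P_v\in\{I,X,Y,Z\}^{\otimes n}$ (identity labelled $0$); every $n$-qubit operator has a unique expansion in the $P_v$. The number of nonzero coefficients of $W$ in this expansion is its Pauli sparsity $\operatorname{supp}_P(W)$. $\|\cdot\|_\infty$ is the operator norm. *)

From HB Require Import structures.
From mathcomp Require Import all_boot all_order all_algebra.
From mathcomp Require Import all_classical all_reals all_analysis.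
From mathcomp Require Import complex.
Set Implicit Arguments. Unset Strict Implicit. Unset Printing Implicit Defensive.
Import Order.TTheory GRing.Theory Num.Theory numFieldNormedType.Exports.
Local Open Scope ring_scope.

Section QuantumDefs.
Variable R : realType.
Local Notation C := (R[i]).

(* Single-qubit Pauli matrices, labelled 0 = I, 1 = X, 2 = Y, 3 = Z,
   entries indexed by bits (false = |0>, true = |1>). *)
Definition pauli1 (a : 'I_4) (x y : bool) : C :=
  match val a with
  | 0 => if x == y then 1 else 0
  | 1 => if x == y then 0 else 1
  | 2 => if x == y then 0 else if x then Complex 0 1 else Complex 0 (-1)
  | _ => if x == y then (if x then -1 else 1) else 0
  end.

Definition qbit (k i : nat) : bool := odd (i %/ 2 ^ k).

(* n-qubit Pauli labels: a Pauli letter for every qubit (equivalently a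
   vector of F_2^{2n}); the all-identity label is the identity operator. *)
Definition plabel (n : nat) := {ffun 'I_n -> 'I_4}.

(* P_v = tensor product of the single-qubit Paulis *)
Definition pauli (n : nat) (v : plabel n) : 'M[C]_(2 ^ n) :=
  \matrix_(i, j) \prod_(k < n) pauli1 (v k) (qbit k i) (qbit k j).

Definition pauli_sparsity_le (n : nat) (W : 'M[C]_(2 ^ n)) (s : nat) : Prop :=
  exists c : {ffun plabel n -> C},
    W = \sum_(v : plabel n) c v *: pauli v /\ (#|[set v | (c v != 0)%R]| <= s)%N.

Definition hermitian_op (N : nat) (W : 'M[C]_N) : Prop :=
  forall i j, W j i = conjc (W i j).

Definition vnorm2 (N : nat) (v : 'cV[C]_N) : R :=
  \sum_(i < N) (complex.Re (v i 0) ^+ 2 + complex.Im (v i 0) ^+ 2).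

Definition opnorm (N : nat) (W : 'M[C]_N) : R :=
  sup [set Num.sqrt (vnorm2 (W *m v))
        | v in [set v : 'cV[C]_N | vnorm2 v = 1]%classic]%classic.

Definition mxpow (N : nat) (A : 'M[C]_N) (k : nat) : 'M[C]_N :=
  iter k (mulmx A) 1%:M.

Definition is_mexp (N : nat) (A M : 'M[C]_N) : Prop :=
  forall i j,
    ((fun K => complex.Re ((\sum_(k < K) (k`!%:R)^-1 *: mxpow A k) i j)) @ \oo
      --> complex.Re (M i j))%classic /\
    ((fun K => complex.Im ((\sum_(k < K) (k`!%:R)^-1 *: mxpow A k) i j)) @ \oo
      --> complex.Im (M i j))%classic.

End QuantumDefs.

Notation cplx R := (complex R) (only parsing).

From HB Require Import structures.
From mathcomp Require Import all_boot all_order all_algebra.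
From mathcomp Require Import all_classical all_reals all_analysis.
From mathcomp Require Import complex zify ring lra.
Import Order.TTheory GRing.Theory Num.Theory.
Import numFieldNormedType.Exports.
Set Implicit Arguments. Unset Strict Implicit. Unset Printing Implicit Defensive.
Local Open Scope ring_scope.

(* Pauli operators multiply as P_u P_v = w(u,v) P_(uv), where uv is the
   letterwise product of labels in the Klein four-group (Z/2)^2.  Hence for a
   group G of labels the span of the P_v, v in G, is a matrix algebra; being a
   finite-dimensional subspace it is also closed under limits, so it contains
   e^(iHT), e^(-iH_jT) and thus e^(-iW) as soon as G contains the Pauli supports
   of H and H_j.  As ||W|| < pi, the map x |-> e^(-ix) is injective on the
   spectrum of W, so Lagrange interpolation gives W = p(e^(-iW)) for a
   polynomial p, and W lies in the span as well.  The group generated by the at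
   most 2m labels of the two supports has at most 2^(2m) = 4^m elements. *)

Section ComplexConvergence.
Variable R : realType.
Local Notation C := R[i].

Definition cplx_cvg (u : nat -> C) (z : C) :=
  ((fun k => complex.Re (u k)) @ \oo --> complex.Re z)%classic /\
  ((fun k => complex.Im (u k)) @ \oo --> complex.Im z)%classic.

Lemma ReD (x y : C) : complex.Re (x + y) = complex.Re x + complex.Re y.
Proof. by case: x; case: y. Qed.

Lemma ImD (x y : C) : complex.Im (x + y) = complex.Im x + complex.Im y.
Proof. by case: x; case: y. Qed.

Lemma ReM (x y : C) :
  complex.Re (x * y) = complex.Re x * complex.Re y - complex.Im x * complex.Im y.
Proof. by case: x; case: y. Qed.

Lemma ImM (x y : C) :
  complex.Im (x * y) = complex.Re x * complex.Im y + complex.Im x * complex.Re y.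
Proof. by case: x; case: y. Qed.

Lemma Re_sum (I : Type) (r : seq I) (F : I -> C) :
  complex.Re (\sum_(k <- r) F k) = \sum_(k <- r) complex.Re (F k).
Proof. exact: (big_morph _ ReD). Qed.

Lemma Im_sum (I : Type) (r : seq I) (F : I -> C) :
  complex.Im (\sum_(k <- r) F k) = \sum_(k <- r) complex.Im (F k).
Proof. exact: (big_morph _ ImD). Qed.

Lemma cplx_cvg_cst (c : C) : cplx_cvg (fun _ => c) c.
Proof. by split; apply: cvg_cst. Qed.

Lemma cplx_cvgD u v a b :
  cplx_cvg u a -> cplx_cvg v b -> cplx_cvg (fun k => u k + v k) (a + b).
Proof.
move=> [ua1 ua2] [vb1 vb2]; split.
- by under eq_fun do rewrite ReD; rewrite ReD; apply: cvgD.
- by under eq_fun do rewrite ImD; rewrite ImD; apply: cvgD.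
Qed.

Lemma cplx_cvgMl (c : C) u a : cplx_cvg u a -> cplx_cvg (fun k => c * u k) (c * a).
Proof.
move=> [ua1 ua2]; split.
- under eq_fun do rewrite ReM; rewrite ReM.
  by apply: cvgB; apply: cvgM => //; apply: cvg_cst.
- under eq_fun do rewrite ImM; rewrite ImM.
  by apply: cvgD; apply: cvgM => //; apply: cvg_cst.
Qed.

Lemma cplx_cvgMr (c : C) u a : cplx_cvg u a -> cplx_cvg (fun k => u k * c) (a * c).
Proof.
by move=> ua; under eq_fun do rewrite mulrC; rewrite mulrC; apply: cplx_cvgMl.
Qed.

Lemma cplx_cvg_sum (I : Type) (r : seq I) (u : I -> nat -> C) (z : I -> C) :
  (forall i, cplx_cvg (u i) (z i)) ->
  cplx_cvg (fun k => \sum_(i <- r) u i k) (\sum_(i <- r) z i).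
Proof.
move=> uz; elim: r => [|x r IHr].
  by under eq_fun do rewrite big_nil; rewrite big_nil; apply: cplx_cvg_cst.
by under eq_fun do rewrite big_cons; rewrite big_cons; apply: cplx_cvgD.
Qed.

Lemma cplx_cvg_unique u a b : cplx_cvg u a -> cplx_cvg u b -> a = b.
Proof.
move=> [ua1 ua2] [ub1 ub2]; have lim_uniq := cvg_unique (@Rhausdorff R).
by apply/eqP; rewrite eq_complex (lim_uniq _ _ _ _ ua1 ub1) (lim_uniq _ _ _ _ ua2 ub2) !eqxx.
Qed.

Definition mx_cvg p q (x : nat -> 'M[C]_(p, q)) (y : 'M[C]_(p, q)) :=
  forall i j, cplx_cvg (fun k => x k i j) (y i j).

Lemma mx_cvg_cst p q (A : 'M[C]_(p, q)) : mx_cvg (fun=> A) A.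
Proof. by move=> i j; apply: cplx_cvg_cst. Qed.

Lemma mx_cvg_mxvec p q (x : nat -> 'M[C]_(p, q)) y :
  mx_cvg x y -> mx_cvg (fun k => mxvec (x k)) (mxvec y).
Proof.
move=> xy i t; rewrite (ord1 i); case/mxvec_indexP: t => a b.
by under eq_fun do rewrite mxvecE; rewrite mxvecE; apply: xy.
Qed.

Lemma mx_cvg_mull p q r (A : 'M[C]_(p, q)) x (y : 'M[C]_(q, r)) :
  mx_cvg x y -> mx_cvg (fun k => A *m x k) (A *m y).
Proof.
move=> xy i j; under eq_fun do rewrite mxE; rewrite mxE.
by apply: cplx_cvg_sum => l; apply: cplx_cvgMl.
Qed.

Lemma mx_cvg_mulr p q r (A : 'M[C]_(q, r)) x (y : 'M[C]_(p, q)) :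
  mx_cvg x y -> mx_cvg (fun k => x k *m A) (y *m A).
Proof.
move=> xy i j; under eq_fun do rewrite mxE; rewrite mxE.
by apply: cplx_cvg_sum => l; apply: cplx_cvgMr.
Qed.

Lemma mx_cvg_unique p q (x : nat -> 'M[C]_(p, q)) y z :
  mx_cvg x y -> mx_cvg x z -> y = z.
Proof. by move=> xy xz; apply/matrixP => i j; apply: cplx_cvg_unique (xy i j) (xz i j). Qed.

Definition mexp_partial N (A : 'M[C]_N) K := \sum_(k < K) (k`!%:R)^-1 *: mxpow A k.

Lemma is_mexpE N (A M : 'M[C]_N) : is_mexp A M <-> mx_cvg (mexp_partial A) M.
Proof. by []. Qed.

End ComplexConvergence.

Lemma qbit0 l : qbit 0 l = odd l.
Proof. by rewrite /qbit expn0 divn1. Qed.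

Lemma qbitS k l : qbit k.+1 l = qbit k l./2.
Proof. by rewrite /qbit expnS divnMA divn2. Qed.

Lemma qbit_inj n (i j : 'I_(2 ^ n)) : (forall k : 'I_n, qbit k i = qbit k j) -> i = j.
Proof.
move=> eq_bits; apply/val_inj => /=; move: (ltn_ord i) (ltn_ord j) eq_bits.
move: (val i) (val j) => {i j}; elim: n => [|n IHn] i j.
  by rewrite expn0 !ltnS !leqn0 => /eqP -> /eqP ->.
move=> lti ltj eq_bits; rewrite -(odd_double_half i) -(odd_double_half j).
have := eq_bits ord0; rewrite !qbit0 => ->; congr (_ + _.*2).
apply: IHn; [by rewrite expnS in lti; lia | by rewrite expnS in ltj; lia |].
by move=> k; have := eq_bits (lift ord0 k); rewrite !qbitS.
Qed.

Lemma sum_nat_double (V : nmodType) (h : nat -> V) M :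
  \sum_(0 <= l < M.*2) h l = \sum_(0 <= l < M) (h l.*2 + h l.*2.+1).
Proof.
elim: M => [|M IHM]; first by rewrite !big_geq.
by rewrite doubleS !big_nat_recr //= IHM addrA.
Qed.

Lemma sum_prod_qbits (V : comNzRingType) n (g : 'I_n -> bool -> V) :
  \sum_(l < 2 ^ n) \prod_(k < n) g k (qbit k l) = \prod_(k < n) (g k false + g k true).
Proof.
elim: n g => [|n IHn] g; first by rewrite expn0 big_ord1 !big_ord0.
rewrite big_ord_recl -(IHn (fun k => g (lift ord0 k))) mulr_sumr.
under eq_bigr do rewrite big_ord_recl qbit0.
rewrite -(big_mkord xpredT (fun l => g ord0 (odd l) *
  \prod_(k < n) g (lift ord0 k) (qbit (lift ord0 k) l))).
rewrite expnS mul2n sum_nat_double big_mkord; apply: eq_big => // l _.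
rewrite /= !odd_double mulrDl; congr (_ * _ + _ * _);
  by apply: eq_bigr => k _; rewrite /bump /= add1n qbitS /= ?doubleK ?uphalf_double.
Qed.

(* Up to phase, Pauli letters multiply as the Klein four-group: with
   I, X, Y, Z = 0, 1, 2, 3 this is the bitwise xor of the labels. *)
Definition letter_xor (a b : nat) : nat :=
  ((odd a (+) odd b) + (odd a./2 (+) odd b./2).*2)%N.

Lemma letter_xor_lt4 a b : (letter_xor a b < 4)%N.
Proof. by rewrite /letter_xor; case: (_ (+) _); case: (_ (+) _). Qed.

Definition letter_mul (a b : 'I_4) : 'I_4 := Ordinal (letter_xor_lt4 a b).

Ltac case_letter a := case: a => [[|[|[|[|?]]]] ?] //.

Lemma letter_mulC : commutative letter_mul.
Proof. by move=> a b; case_letter a; case_letter b; apply/val_inj. Qed.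

Lemma letter_mulA : associative letter_mul.
Proof. by move=> a b c; case_letter a; case_letter b; case_letter c; apply/val_inj. Qed.

Lemma letter_mul1 : left_id (ord0 : 'I_4) letter_mul.
Proof. by move=> a; case_letter a; apply/val_inj. Qed.

Lemma letter_mulxx : self_inverse (ord0 : 'I_4) letter_mul.
Proof. by move=> a; case_letter a; apply/val_inj. Qed.

Section PauliProduct.
Variable R : realType.
Local Notation C := R[i].

Definition letter_phase (a b : 'I_4) : C :=
  match val a, val b with
  | 1%N, 2%N | 2%N, 3%N | 3%N, 1%N => 'i%C
  | 2%N, 1%N | 3%N, 2%N | 1%N, 3%N => - 'i%C
  | _, _ => 1
  end.

Lemma pauli1_mul (a b : 'I_4) (x z : bool) :
  pauli1 R a x false * pauli1 R b false z + pauli1 R a x true * pauli1 R b true z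
  = letter_phase a b * pauli1 R (letter_mul a b) x z.
Proof.
case_letter a; case_letter b; case: x; case: z; rewrite /pauli1 /letter_phase /=;
  by apply/eqP; rewrite eq_complex /=; apply/andP; split; apply/eqP; ring.
Qed.

Definition plabel_mul n (u v : plabel n) : plabel n := [ffun k => letter_mul (u k) (v k)].

Definition plabel1 n : plabel n := [ffun => ord0].

Definition plabel_phase n (u v : plabel n) : C := \prod_k letter_phase (u k) (v k).

Lemma pauli_mul n (u v : plabel n) :
  pauli R u *m pauli R v = plabel_phase u v *: pauli R (plabel_mul u v).
Proof.
apply/matrixP => i j; rewrite !mxE.
under eq_bigr do rewrite !mxE -big_split /=.
rewrite (sum_prod_qbits (fun k y => pauli1 R (u k) (qbit k i) y * pauli1 R (v k) y (qbit k j))).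
under eq_bigr do rewrite pauli1_mul.
by rewrite big_split; congr (_ * _); apply: eq_bigr => k _; rewrite ffunE.
Qed.

Lemma pauli_plabel1 n : pauli R (plabel1 n) = 1%:M.
Proof.
apply/matrixP => i j; rewrite !mxE.
have [/existsP [k neq_k] | /existsPn eq_bits] := boolP [exists k : 'I_n, qbit k i != qbit k j].
  rewrite (bigD1 k) //= ffunE /pauli1 /= (negbTE neq_k) mul0r.
  by case: eqP => // eq_ij; move: neq_k; rewrite eq_ij eqxx.
have -> : i = j by apply: qbit_inj => k; apply/eqP; rewrite -[_ == _]negbK eq_bits.
by rewrite eqxx big1 // => k _; rewrite ffunE /pauli1 /= eqxx.
Qed.

End PauliProduct.

Section LabelGroup.
Variable n : nat.
Implicit Types (u v : plabel n) (S X : {set plabel n}).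

Lemma plabel_mulA : associative (@plabel_mul n).
Proof. by move=> u v w; apply/ffunP => k; rewrite !ffunE letter_mulA. Qed.

Lemma plabel_mulC : commutative (@plabel_mul n).
Proof. by move=> u v; apply/ffunP => k; rewrite !ffunE letter_mulC. Qed.

Lemma plabel_mul1 : left_id (plabel1 n) (@plabel_mul n).
Proof. by move=> u; apply/ffunP => k; rewrite !ffunE letter_mul1. Qed.

Lemma plabel_mulxx : self_inverse (plabel1 n) (@plabel_mul n).
Proof. by move=> u; apply/ffunP => k; rewrite !ffunE letter_mulxx. Qed.

HB.instance Definition _ := Monoid.isComLaw.Build (plabel n) (plabel1 n) (@plabel_mul n)
  plabel_mulA plabel_mulC plabel_mul1.

Definition plabel_prod X := \big[@plabel_mul n/plabel1 n]_(v in X) v.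

(* The subgroup generated by S: as all labels are involutions, it consists of
   the products of the subsets of S. *)
Definition plabel_gen S := plabel_prod @: powerset S.

Lemma plabel_gen1 S : plabel1 n \in plabel_gen S.
Proof.
apply/imsetP; exists finset.set0; first by rewrite powersetE finset.sub0set.
by rewrite /plabel_prod big_set0.
Qed.

Lemma plabel_gen_sub S : S \subset plabel_gen S.
Proof.
apply/fintype.subsetP => v Sv; apply/imsetP; exists [set v]; first by rewrite powersetE finset.sub1set.
by rewrite /plabel_prod big_set1.
Qed.

Lemma plabel_prodD X Y :
  plabel_mul (plabel_prod X) (plabel_prod Y) = plabel_prod ((X :\: Y) :|: (Y :\: X)).
Proof.
rewrite /plabel_prod (big_setID Y) (big_setID (A := Y) X) finset.setIC /=.
rewrite Monoid.mulmACA /= plabel_mulxx plabel_mul1 (big_setID (A := _ :|: _) X).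
congr (plabel_mul _ _); apply: eq_bigl => w; rewrite !inE;
  by case: (w \in X); case: (w \in Y).
Qed.

Lemma plabel_genM S u v :
  u \in plabel_gen S -> v \in plabel_gen S -> plabel_mul u v \in plabel_gen S.
Proof.
move=> /imsetP [X + ->] /imsetP [Y + ->]; rewrite !powersetE => sXS sYS.
rewrite plabel_prodD; apply/imsetP; exists ((X :\: Y) :|: (Y :\: X)) => //.
by rewrite powersetE finset.subUset !(fintype.subset_trans (finset.subsetDl _ _)).
Qed.

Lemma card_plabel_gen S : (#|plabel_gen S| <= 2 ^ #|S|)%N.
Proof. by rewrite -card_powerset leq_imset_card. Qed.

End LabelGroup.

Section PauliSpan.
Variable R : realType.
Local Notation C := R[i].
Variable n : nat.
Variable G : {set plabel n}.

Definition pauli_span (M : 'M[C]_(2 ^ n)) := exists c : plabel n -> C,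
  (forall v, v \notin G -> c v = 0) /\ M = \sum_v c v *: pauli R v.

Lemma pauli_span0 : pauli_span 0.
Proof. by exists (fun=> 0); split => //; rewrite big1 // => v _; rewrite scale0r. Qed.

Lemma pauli_spanD M N : pauli_span M -> pauli_span N -> pauli_span (M + N).
Proof.
move=> [c [c0 ->]] [d [d0 ->]]; exists (fun v => c v + d v); split.
  by move=> v Gv; rewrite c0 // d0 // addr0.
by rewrite -big_split; apply: eq_bigr => v _; rewrite scalerDl.
Qed.

Lemma pauli_spanZ a M : pauli_span M -> pauli_span (a *: M).
Proof.
move=> [c [c0 ->]]; exists (fun v => a * c v); split.
  by move=> v Gv; rewrite c0 // mulr0.
by rewrite scaler_sumr; apply: eq_bigr => v _; rewrite scalerA.
Qed.

Lemma pauli_span_sum (I : finType) (F : I -> 'M[C]_(2 ^ n)) :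
  (forall i, pauli_span (F i)) -> pauli_span (\sum_i F i).
Proof. by move=> spanF; apply: big_ind => //; [apply: pauli_span0 | apply: pauli_spanD]. Qed.

Lemma pauli_span_pauli v : v \in G -> pauli_span (pauli R v).
Proof.
move=> Gv; exists (fun w => (w == v)%:R); split.
  by move=> w; apply: contraNeq; rewrite pnatr_eq0 eqb0 negbK => /eqP ->.
rewrite (bigD1 v) //= eqxx scale1r big1 ?addr0 // => w /negbTE ->.
by rewrite scale0r.
Qed.

Lemma pauli_span_sparsity M s : (#|G| <= s)%N -> pauli_span M -> pauli_sparsity_le M s.
Proof.
move=> card_G [c [c0 ->]]; exists [ffun v => c v]; split.
  by apply: eq_bigr => v _; rewrite ffunE.
apply: leq_trans card_G; apply: subset_leq_card; apply/fintype.subsetP => v.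
by rewrite inE ffunE; apply: contraNT => /c0 ->.
Qed.

Definition pauli_rows : 'M[C]_(#|{: plabel n}|, 2 ^ n * 2 ^ n) :=
  \matrix_r (if enum_val r \in G then mxvec (pauli R (enum_val r)) else 0).

Lemma pauli_spanE M : pauli_span M <-> (mxvec M <= pauli_rows)%MS.
Proof.
split => [[c [c0 ->]] | /submxP [D eqMD]].
  rewrite raddf_sum /=; apply: summx_sub => v _; rewrite linearZ /=.
  have [Gv | /c0 ->] := boolP (v \in G); last by rewrite scale0r sub0mx.
  have -> : mxvec (pauli R v) = row (enum_rank v) pauli_rows by rewrite rowK enum_rankK Gv.
  by apply: scalemx_sub; apply: row_sub.
rewrite -(mxvecK M) eqMD mulmx_sum_row raddf_sum /=; apply: pauli_span_sum => r.
rewrite linearZ /=; apply: pauli_spanZ; rewrite rowK.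
by case: ifP => Gr; [rewrite mxvecK; apply: pauli_span_pauli | rewrite linear0; apply: pauli_span0].
Qed.

(* Closed under limits, as the kernel of the linear map M |-> mxvec M *m cokermx pauli_rows. *)
Lemma pauli_span_closed (x : nat -> 'M[C]_(2 ^ n)) M :
  (forall k, pauli_span (x k)) -> mx_cvg x M -> pauli_span M.
Proof.
move=> span_x xM; apply/pauli_spanE; rewrite submxE; apply/eqP.
have := mx_cvg_mulr (cokermx pauli_rows) (mx_cvg_mxvec xM).
have -> : (fun k => mxvec (x k) *m cokermx pauli_rows) = fun=> 0.
  by apply: funext => k; apply/eqP; rewrite -submxE; apply/pauli_spanE.
by move/mx_cvg_unique; apply; apply: mx_cvg_cst.
Qed.

Hypothesis G1 : plabel1 n \in G.
Hypothesis GM : forall u v, u \in G -> v \in G -> plabel_mul u v \in G.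

Lemma pauli_span1 : pauli_span 1%:M.
Proof. by rewrite -(pauli_plabel1 R); apply: pauli_span_pauli. Qed.

Lemma pauli_spanM M N : pauli_span M -> pauli_span N -> pauli_span (M *m N).
Proof.
move=> [c [c0 ->]] [d [d0 ->]]; rewrite mulmx_suml; apply: pauli_span_sum => u.
rewrite mulmx_sumr; apply: pauli_span_sum => v.
rewrite -scalemxAl -scalemxAr pauli_mul !scalerA.
have [Gu | /c0 ->] := boolP (u \in G); last by rewrite !mul0r scale0r; apply: pauli_span0.
have [Gv | /d0 ->] := boolP (v \in G); last by rewrite mulr0 mul0r scale0r; apply: pauli_span0.
by apply/pauli_spanZ/pauli_span_pauli/GM.
Qed.

Lemma pauli_span_mxpow A k : pauli_span A -> pauli_span (mxpow A k).
Proof.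
move=> spanA; elim: k => [|k IHk]; first exact: pauli_span1.
by rewrite /mxpow iterS; apply: pauli_spanM.
Qed.

Lemma pauli_span_mexp A E : pauli_span A -> is_mexp A E -> pauli_span E.
Proof.
move=> spanA /is_mexpE AE; apply: pauli_span_closed AE => K.
by apply: pauli_span_sum => k; apply/pauli_spanZ/pauli_span_mxpow.
Qed.

End PauliSpan.

Lemma pauli_sparsity_span (R : realType) n (M : 'M[R[i]]_(2 ^ n)) s :
  pauli_sparsity_le M s ->
  exists2 S : {set plabel n}, (#|S| <= s)%N & forall G : {set plabel n}, S \subset G -> pauli_span G M.
Proof.
move=> [c [-> card_c]]; exists [set v | c v != 0] => // G sub_G.
exists c; split => // v; apply: contraNeq => cv_neq0.
by apply: (fintype.subsetP sub_G); rewrite inE.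
Qed.

Section ExpNi.
Variable R : realType.
Local Notation C := R[i].

Lemma expNi_coeff (r : R) k :
  (k`!%:R)^-1 * (- 'i%C * r%:C%C) ^+ k = Complex (cos_coeff r k) (- sin_coeff r k) :> C.
Proof.
have expNi_double j : (- 'i%C) ^+ j.*2 = ((-1) ^+ j)%:C%C :> C.
  by rewrite -mul2n exprM sqrrN sqr_i rmorphXn /= rmorphN1.
rewrite exprMn -rmorphXn /= mulrCA -(rmorph_nat (real_complex R)) -fmorphV -rmorphM /=.
rewrite /cos_coeff /sin_coeff /= -exprnP.
have := odd_double_half k; set j := k./2; case: (odd k) => <-.
- rewrite /= doubleK exprS expNi_double; simpc.
  by apply/eqP; rewrite eq_complex /=; apply/andP; split; apply/eqP; ring.
- rewrite /= add0n expNi_double; simpc.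
  by apply/eqP; rewrite eq_complex /=; apply/andP; split; apply/eqP; ring.
Qed.

Lemma cplx_cvg_expNi (r : R) :
  cplx_cvg (fun K => \sum_(k < K) (k`!%:R)^-1 * (- 'i%C * r%:C%C) ^+ k)
           (Complex (cos r) (- sin r)).
Proof.
split; [under eq_fun do rewrite Re_sum | under eq_fun do rewrite Im_sum];
  under eq_fun do under eq_bigr do rewrite expNi_coeff /=.
- rewrite cos.unlock.
  suff -> : (fun K => \sum_(k < K) cos_coeff r k) = series (cos_coeff r).
    exact: is_cvg_series_cos_coeff.
  by apply: funext => K; rewrite /series /= big_mkord.
- rewrite sin.unlock.
  suff -> : (fun K => \sum_(k < K) - sin_coeff r k) = fun K => - series (sin_coeff r) K.
    by apply: cvgN; apply: is_cvg_series_sin_coeff.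
  by apply: funext => K; rewrite sumrN /series /= big_mkord.
Qed.

End ExpNi.

Lemma cos_sin_inj (R : realType) (a b : R) :
  `|a| < pi -> `|b| < pi -> cos a = cos b -> sin a = sin b -> a = b.
Proof.
move=> a_lt b_lt cos_ab sin_ab.
have /eqP : `|a| = `|b|.
  by apply: cos_inj; rewrite ?cos_norm // in_itv /= normr_ge0 ltW.
rewrite eqr_norm2 => /orP [/eqP //|/eqP a_eq].
rewrite a_eq sinN in sin_ab; have sin_b0 : sin b = 0 by lra.
have [b0 | b_neq0] := eqVneq b 0; first by rewrite a_eq b0 oppr0.
have : 0 < sin `|b| by apply: sin_gt0_pi; rewrite normr_gt0 b_neq0.
by case: (ler0P b) => b_sgn; rewrite ?ler0_norm ?gtr0_norm // ?sinN sin_b0 ?oppr0 ltxx.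
Qed.

Lemma interpolation_poly (F : fieldType) (I : eqType) (s : seq I) (x y : I -> F) :
  {in s &, forall i j, x i = x j -> y i = y j} ->
  exists p : {poly F}, {in s, forall i, p.[x i] = y i}.
Proof.
elim: s => [|i s IHs] xy; first by exists 0.
have [q qxy] := IHs (sub_in2 (@mem_behead _ (i :: s)) xy).
have [/hasP [j sj /eqP xji] | /hasPn xi_new] := boolP (has (fun j => x j == x i) s).
  exists q => k; rewrite inE => /predU1P [-> | /qxy //].
  by rewrite -xji qxy // (xy j i) // inE ?eqxx ?sj ?orbT.
pose P := \prod_(j <- s) ('X - (x j)%:P).
have PE z : P.[z] = \prod_(j <- s) (z - x j).
  by rewrite horner_prod; apply: eq_bigr => j _; rewrite hornerXsubC.
have Pxi_neq0 : P.[x i] != 0.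
  rewrite PE prodf_seq_neq0; apply/allP => j sj /=.
  by rewrite subr_eq0 eq_sym; apply: xi_new.
exists (q + ((y i - q.[x i]) / P.[x i]) *: P) => k; rewrite inE => /predU1P [-> | sk].
  by rewrite hornerD hornerZ mulfVK // addrC subrK.
have Pxk : P.[x k] = 0.
  by apply/eqP; rewrite PE prodf_seq_eq0; apply/hasP; exists k; rewrite //= subrr.
by rewrite hornerD hornerZ Pxk mulr0 addr0 qxy.
Qed.

Section ConjugateDiagonal.
Variable R : realType.
Local Notation C := R[i].
Variable N : nat.
Variables P Q : 'M[C]_N.
Hypothesis PQ : P *m Q = 1%:M.
Hypothesis QP : Q *m P = 1%:M.

Lemma mxpow_conj_diag (e : 'rV[C]_N) k :
  mxpow (Q *m diag_mx e *m P) k = Q *m diag_mx (\row_j e 0 j ^+ k) *m P.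
Proof.
elim: k => [|k IHk].
  have -> : \row_j e 0 j ^+ 0 = const_mx 1 by apply/rowP => j; rewrite !mxE expr0.
  by rewrite diag_const_mx mulmx1 QP.
rewrite /mxpow iterS -/(mxpow _ k) IHk -!mulmxA [P *m (Q *m _)]mulmxA PQ mul1mx.
rewrite !mulmxA -[Q *m _ *m _]mulmxA mulmx_diag.
by congr (Q *m diag_mx _ *m P); apply/rowP => j; rewrite !mxE exprS.
Qed.

Lemma sum_mxpow_conj_diag (e : 'rV[C]_N) K (a : 'I_K -> C) :
  \sum_(k < K) a k *: mxpow (Q *m diag_mx e *m P) k =
  Q *m diag_mx (\row_j \sum_(k < K) a k * e 0 j ^+ k) *m P.
Proof.
have -> : \row_j \sum_(k < K) a k * e 0 j ^+ k = \sum_(k < K) a k *: \row_j e 0 j ^+ k.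
  by apply/rowP => j; rewrite !mxE summxE; apply: eq_bigr => k _; rewrite !mxE.
rewrite raddf_sum mulmx_sumr mulmx_suml; apply: eq_bigr => k _.
rewrite mxpow_conj_diag scalemxAl scalemxAr; congr (_ *m _ *m _).
by apply/matrixP => i j; rewrite !mxE mulrnAr.
Qed.

End ConjugateDiagonal.

Section OperatorNorm.
Variable R : realType.
Local Notation C := R[i].
Variable N : nat.
Local Open Scope sesquilinear_scope.

Lemma vnorm2E (v : 'cV[C]_N) : (vnorm2 v)%:C%C = (v ^t* *m v) 0 0.
Proof.
rewrite /vnorm2 rmorph_sum !mxE; apply: eq_bigr => i _; rewrite !mxE.
by case: (v i 0) => a b; apply/eqP; rewrite eq_complex /=; apply/andP; split; apply/eqP; ring.
Qed.

Lemma vnorm2_unitary (U : 'M[C]_N) (v : 'cV[C]_N) :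
  U ^t* *m U = 1%:M -> vnorm2 (U *m v) = vnorm2 v.
Proof.
move=> UtU; apply: (@complexI R); rewrite !vnorm2E trmx_mul map_mxM.
by rewrite mulmxA -[_ *m U ^t* *m U]mulmxA UtU mulmx1.
Qed.

Lemma vnorm2_diag_le (r : 'I_N -> R) (v : 'cV[C]_N) :
  vnorm2 (diag_mx (\row_j (r j)%:C%C) *m v) <= (\sum_j r j ^+ 2) * vnorm2 v.
Proof.
rewrite /vnorm2 mulr_sumr; apply: ler_sum => i _.
rewrite mul_diag_mx !mxE; case: (v i 0) => x y /=.
have -> : (r i * x - 0 * y) ^+ 2 + (r i * y + 0 * x) ^+ 2 = r i ^+ 2 * (x ^+ 2 + y ^+ 2).
  by ring.
apply: ler_wpM2r; first by rewrite addr_ge0 ?sqr_ge0.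
by rewrite (bigD1 i) //= lerDl sumr_ge0 // => j _; rewrite sqr_ge0.
Qed.

Lemma vnorm2_delta (r : R) (j : 'I_N) : vnorm2 (r%:C%C *: delta_mx j 0 : 'cV[C]_N) = r ^+ 2.
Proof.
rewrite /vnorm2 (bigD1 j) //= big1 => [|i /negbTE neq_ij]; rewrite !mxE ?neq_ij /=.
  by rewrite eqxx /=; ring.
by ring.
Qed.

Variable P : 'M[C]_N.
Hypothesis PPt : P *m P ^t* = 1%:M.
Hypothesis PtP : P ^t* *m P = 1%:M.

Lemma opnorm_conj_diag_ge (r : 'I_N -> R) j :
  `|r j| <= opnorm (P ^t* *m diag_mx (\row_i (r i)%:C%C) *m P).
Proof.
rewrite /opnorm; set D := diag_mx _; set S := (X in sup X).
have Pt_unitary : P ^t* ^t* *m P ^t* = 1%:M by rewrite trmxCK.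
have S_ub : ubound S (Num.sqrt (\sum_i r i ^+ 2)).
  move=> _ [v /= v1 <-]; apply: ler_wsqrtr.
  rewrite -!mulmxA vnorm2_unitary //.
  by apply: le_trans (vnorm2_diag_le _ _) _; rewrite vnorm2_unitary // v1 mulr1.
have S_rj : S `|r j|.
  exists (P ^t* *m delta_mx j 0).
    by rewrite /= vnorm2_unitary // -(scale1r (delta_mx _ _)) vnorm2_delta expr1n.
  rewrite -!mulmxA [P *m (P ^t* *m _)]mulmxA PPt mul1mx.
  have -> : D *m delta_mx j 0 = (r j)%:C%C *: (delta_mx j 0 : 'cV[C]_N).
    apply/matrixP => i k; rewrite mul_diag_mx !mxE.
    by case: eqP => [->|_]; rewrite ?mulr1 ?mulr0.
  by rewrite vnorm2_unitary // vnorm2_delta sqrtr_sqr.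
by apply: sup_upper_bound => //; split; [exists `|r j| | exists (Num.sqrt (\sum_i r i ^+ 2))].
Qed.

End OperatorNorm.

Section HermitianFunctionalCalculus.
Variable R : realType.
Local Notation C := R[i].
Variable N : nat.
Local Open Scope sesquilinear_scope.

Lemma hermitian_op_diag (W : 'M[C]_N) : hermitian_op W ->
  exists (P : 'M[C]_N) (r : 'I_N -> R), [/\ P *m P ^t* = 1%:M, P ^t* *m P = 1%:M
    & W = P ^t* *m diag_mx (\row_j (r j)%:C%C) *m P].
Proof.
move=> herm_W; have hermsym_W : W \is hermsymmx.
  by apply/is_hermitianmxP; rewrite expr0 scale1r; apply/matrixP => i j; rewrite !mxE herm_W.
have /orthomx_spectralP eqW := hermitian_normalmx hermsym_W.
have /mxOverP real_d := hermitian_spectral_diag_real hermsym_W.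
have unitary_P := spectral_unitarymx W; have invP := invmx_unitary unitary_P.
exists (spectralmx W), (fun j => complex.Re (spectral_diag W 0 j)); split.
- exact/unitarymxP.
- by rewrite -invP mulVmx // unitarymx_unit.
- suff -> : \row_j (complex.Re (spectral_diag W 0 j))%:C%C = spectral_diag W.
    by rewrite -invP.
  by apply/rowP => j; rewrite mxE RRe_real.
Qed.

Lemma mexp_Ni_conj_diag (P : 'M[C]_N) (r : 'I_N -> R) E :
  P *m P ^t* = 1%:M -> P ^t* *m P = 1%:M ->
  is_mexp (- 'i%C *: (P ^t* *m diag_mx (\row_j (r j)%:C%C) *m P)) E ->
  E = P ^t* *m diag_mx (\row_j Complex (cos (r j)) (- sin (r j))) *m P.
Proof.
move=> PPt PtP; rewrite scalemxAl scalemxAr -diag_mx_is_scalable.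
have -> : - 'i%C *: \row_j (r j)%:C%C = \row_j (- 'i%C * (r j)%:C%C) :> 'rV[C]_N.
  by apply/rowP => j; rewrite !mxE.
move=> /is_mexpE /(mx_cvg_mull P) /(mx_cvg_mulr (P ^t*)); rewrite /mexp_partial.
under eq_fun do rewrite (sum_mxpow_conj_diag PPt PtP) !mulmxA PPt mul1mx -mulmxA PPt mulmx1.
move=> cvg_diag; have <- : P *m E *m P ^t* = diag_mx (\row_j Complex (cos (r j)) (- sin (r j))).
  apply: (mx_cvg_unique cvg_diag) => i k; under eq_fun do rewrite !mxE; rewrite !mxE.
  case: eqP => _ /=; under eq_fun do rewrite ?mulr1n ?mulr0n; rewrite ?mulr1n ?mulr0n.
    exact: cplx_cvg_expNi.
  exact: cplx_cvg_cst.
by rewrite !mulmxA PtP mul1mx -mulmxA PtP mulmx1.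
Qed.

Lemma hermitian_poly_mexp (W E : 'M[C]_N) :
  hermitian_op W -> opnorm W < pi -> is_mexp (- 'i%C *: W) E ->
  exists p : {poly C}, W = \sum_(k < size p) p`_k *: mxpow E k.
Proof.
move=> /hermitian_op_diag [P [r [PPt PtP eqW]]] normW cvgE.
have r_lt_pi j : `|r j| < pi.
  by apply: le_lt_trans normW; rewrite eqW; apply: opnorm_conj_diag_ge.
rewrite eqW in cvgE; rewrite (mexp_Ni_conj_diag PPt PtP cvgE).
pose lam j : C := Complex (cos (r j)) (- sin (r j)).
have [|p p_lam] := @interpolation_poly _ _ (enum 'I_N) lam (fun j => (r j)%:C%C).
  by move=> i j _ _ [cos_ij /oppr_inj sin_ij]; rewrite (cos_sin_inj (r_lt_pi i) (r_lt_pi j)).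
exists p; rewrite eqW (sum_mxpow_conj_diag PPt PtP); set d := \row_j \sum_(k < _) _.
suff -> : d = \row_j (r j)%:C%C by [].
apply/rowP => j; rewrite !mxE -p_lam ?mem_enum // horner_coef.
by apply: eq_bigr.
Qed.

End HermitianFunctionalCalculus.

Theorem mainTheorem12 (R : realType) (n m : nat) (H Hj W : 'M[cplx R]_(2 ^ n))
    (T phi : R) :
  hermitian_op H -> hermitian_op Hj ->
  pauli_sparsity_le H m -> pauli_sparsity_le Hj m ->
  hermitian_op W -> opnorm W < pi ->
  (exists E1 E2 E3 : 'M[cplx R]_(2 ^ n),
      is_mexp (- Complex 0 1 *: W) E1 /\
      is_mexp (Complex 0 T *: H) E2 /\
      is_mexp (- Complex 0 T *: Hj) E3 /\
      E1 = Complex (cos phi) (sin phi) *: (E2 *m E3)) ->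
  pauli_sparsity_le W (4 ^ m).
Proof.
move=> _ _ /pauli_sparsity_span [SH card_SH span_H] /pauli_sparsity_span [SJ card_SJ span_J].
move=> herm_W normW [E1 [E2 [E3 [expW [expH [expJ eqE1]]]]]].
pose G := plabel_gen (SH :|: SJ).
have G1 := plabel_gen1 (SH :|: SJ); have GM := @plabel_genM _ (SH :|: SJ).
have [sub_H sub_J] : SH \subset G /\ SJ \subset G.
  by apply/andP; rewrite -finset.subUset plabel_gen_sub.
have span_E1 : pauli_span G E1.
  rewrite eqE1; apply/pauli_spanZ/pauli_spanM => //.
    by apply: (pauli_span_mexp G1 GM _ expH); apply/pauli_spanZ/span_H.
  by apply: (pauli_span_mexp G1 GM _ expJ); apply/pauli_spanZ/span_J.
apply: (@pauli_span_sparsity _ _ G).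
  have -> : (4 ^ m = 2 ^ (2 * m))%N by rewrite expnM.
  rewrite (leq_trans (card_plabel_gen _)) // leq_pexp2l // mul2n -addnn.
  by rewrite (leq_trans (leq_card_setU _ _)) // leq_add.
have [p ->] := hermitian_poly_mexp herm_W normW expW.
by apply: pauli_span_sum => k; apply/pauli_spanZ/pauli_span_mxpow.
Qed.
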